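(* If $F$ is a field of non-zero characteristic $p$, then $\text{Ш}_F(F)$ is not a noetherian ring.
   Context: $\text{Ш}_F(F)=\bigoplus_{n\in\mathbb{N}} F\,\mathbf{1}^{\otimes (n+1)}$ is the shuffle Baxter $F$-algebra on $F$ (free Baxter $F$-algebra on the empty set) of weight $\lambda\in F$, with multiplication determined by $\mathbf{1}^{\otimes (m+1)} \mathbf{1}^{\otimes (n+1)} = \sum_{k=0}^m \binom{m+n-k}{n}\binom{n}{k} \lambda^k \mathbf{1}^{\otimes (m+n+1-k)}$ and Baxter operator $P(\mathbf{1}^{\otimes(n+1)})=\mathbf{1}^{\otimes(n+2)}$. *)

From mathcomp Require Import all_boot all_order all_algebra.
Set Implicit Arguments. Unset Strict Implicit. Unset Printing Implicit Defensive.
Import GRing.Theory.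
Local Open Scope ring_scope.

(* The shuffle Baxter F-algebra  Sha_F(F) = \bigoplus_{n} F 1^{(x)(n+1)}  of
   weight [lam].  Its underlying F-vector space is modelled by {poly F}:
   an element  \sum_n a_n 1^{(x)(n+1)}  is represented by the finitely
   supported coefficient sequence (a_n), i.e. the polynomial \sum_n a_n 'X^n,
   so the basis vector 1^{(x)(n+1)} is 'X^n.  Addition, negation and zero are
   those of the vector space; the multiplication is the shuffle product below
   (NOT polynomial multiplication). *)
Definition sha_mul (F : fieldType) (lam : F) (a b : {poly F}) : {poly F} :=
  \sum_(m < size a) \sum_(n < size b) \sum_(k < m.+1)
     (a`_m * b`_n * ('C(m + n - k, n) * 'C(n, k))%:R * lam ^+ k)
       *: 'X^(m + n - k).

Definition sha_P (F : fieldType) (a : {poly F}) : {poly F} := a * 'X.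

Definition sha_ideal (F : fieldType) (lam : F) (I : {poly F} -> Prop) : Prop :=
  [/\ I 0,
      (forall x y, I x -> I y -> I (x + y)),
      (forall x, I x -> I (- x)) &
      (forall r x, I x -> I (sha_mul lam r x) /\ I (sha_mul lam x r))].

Definition sha_noetherian (F : fieldType) (lam : F) : Prop :=
  forall I : nat -> {poly F} -> Prop,
    (forall i, sha_ideal lam (I i)) ->
    (forall i x, I i x -> I i.+1 x) ->
    exists N, forall n, (N <= n)%N -> forall x, I n x <-> I N x.

(* Proof: in characteristic p, for each i the span I_i of the basis vectors
   1^{(x)(j+1)} with p^i not dividing j is an ideal, because
   p | 'C(N, n) whenever p^i | N and p^i does not divide n, and every
   coefficient of the shuffle product landing in degree N is a multiple of
   'C(N, n) for the degree n of either factor.  The chain I_0, I_1, ... is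
   strictly increasing, as 1^{(x)(p^i + 1)} lies in I_(i+1) but not in I_i. *)
From mathcomp Require Import all_boot all_order all_algebra.
Import GRing.Theory.
From mathcomp Require Import ring zify.

Set Implicit Arguments.
Unset Strict Implicit.
Unset Printing Implicit Defensive.

(* n * 'C(N, n) = N * 'C(N.-1, n.-1), and logn p n < i <= logn p N. *)
Lemma prime_dvdn_bin p i N n :
  prime p -> p ^ i %| N -> ~~ (p ^ i %| n) -> p %| 'C(N, n).
Proof.
move=> p_pr pi_N pi_n.
have n_gt0 : 0 < n by case: n pi_n; rewrite ?dvdn0.
have [q p_coprime_q nE] := pfactor_coprime p_pr n_gt0.
set v := logn p n in nE.
have lt_v_i : v < i.
  by rewrite ltnNge; apply: contra pi_n => le_i_v; rewrite nE dvdn_mull ?dvdn_exp2l.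
have : p ^ v.+1 %| n * 'C(N, n).
  have -> : n * 'C(N, n) = N * 'C(N.-1, n.-1) by rewrite mul_bin_diag prednK.
  by rewrite dvdn_mulr // (dvdn_trans (dvdn_exp2l p lt_v_i) pi_N).
rewrite expnSr {1}nE (mulnC q) -mulnA dvdn_pmul2l ?expn_gt0 ?prime_gt0 //.
by rewrite Gauss_dvdr // coprime_sym.
Qed.

(* Up to the factor lam ^+ k, the coefficient of 1^{(x)(m+n-k+1)} in the
   shuffle product of 1^{(x)(m+1)} and 1^{(x)(n+1)}. *)
Definition sha_coef m n k := 'C(m + n - k, n) * 'C(n, k).

Lemma sha_coef_small m n k : m < k -> sha_coef m n k = 0.
Proof.
move=> lt_m_k; rewrite /sha_coef; have [le_k_n | lt_n_k] := leqP k n.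
  by rewrite bin_small ?mul0n //; lia.
by rewrite (bin_small lt_n_k) muln0.
Qed.

Lemma sha_coefC m n k : sha_coef m n k = sha_coef n m k.
Proof.
have [lt_m_k | le_k_m] := ltnP m k.
  by rewrite sha_coef_small // /sha_coef (bin_small lt_m_k) muln0.
have [lt_n_k | le_k_n] := ltnP n k.
  by rewrite [RHS]sha_coef_small // /sha_coef (bin_small lt_n_k) muln0.
rewrite /sha_coef addnC.
apply/eqP; rewrite -(@eqn_pmul2r ((m - k)`! * k`! * (n - k)`!)) ?muln_gt0 ?fact_gt0 //.
have le_n_mnk : n <= n + m - k by rewrite -addnBA // leq_addr.
have le_m_mnk : m <= n + m - k by rewrite addnC -addnBA // leq_addr.
have {1}-> : m - k = n + m - k - n by rewrite addnC subnAC addnK.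
have {2}-> : n - k = n + m - k - m by rewrite subnAC addnK.
apply/eqP; transitivity (n + m - k)`!.
  by rewrite -(bin_fact le_n_mnk) -(bin_fact le_k_n); ring.
by rewrite -(bin_fact le_m_mnk) -(bin_fact le_k_m); ring.
Qed.

Lemma prime_dvdn_sha_coef p i m n k :
  prime p -> p ^ i %| m + n - k -> ~~ (p ^ i %| n) -> p %| sha_coef m n k.
Proof. by move=> p_pr pi_mnk pi_n; rewrite dvdn_mulr // (prime_dvdn_bin p_pr pi_mnk). Qed.

Local Open Scope ring_scope.

Lemma sha_mul_coef_eq0 (F : fieldType) (lam : F) (a b : {poly F}) j :
  (forall m n k, (m + n - k)%N = j ->
     a`_m * b`_n * (sha_coef m n k)%:R = 0) ->
  (sha_mul lam a b)`_j = 0.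
Proof.
move=> terms_eq0; rewrite /sha_mul coef_sum big1 // => -[m /= _] _.
rewrite coef_sum big1 // => -[n /= _] _.
rewrite coef_sum big1 // => -[k /= _] _.
rewrite coefZ coefXn; case: eqP => [mnk_j | _]; last by rewrite mulr0.
by rewrite terms_eq0 ?mul0r.
Qed.

Definition avoids_multiples (R : nzRingType) (d : nat) (x : {poly R}) : Prop :=
  forall j, (d %| j)%N -> x`_j = 0.

Lemma avoids_multiplesW (R : nzRingType) d e (x : {poly R}) :
  (d %| e)%N -> avoids_multiples d x -> avoids_multiples e x.
Proof. by move=> d_e x_d j e_j; apply/x_d/(dvdn_trans d_e). Qed.

Lemma avoids_multiples_XnP (R : nzRingType) d n :
  avoids_multiples d ('X^n : {poly R}) <-> ~~ (d %| n)%N.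
Proof.
split=> [Xn_d | d_n j d_j].
  by apply/negP => /Xn_d/eqP; rewrite coefXn eqxx oner_eq0.
by rewrite coefXn; case: eqP d_j => // ->; rewrite (negPf d_n).
Qed.

Lemma sha_ideal_avoids_multiples (F : fieldType) (p : nat) (lam : F) i :
  p \in [pchar F] -> sha_ideal lam (avoids_multiples (p ^ i)).
Proof.
move=> p_char; have p_pr := pcharf_prime p_char.
have term_eq0 (x : {poly F}) c m n k : avoids_multiples (p ^ i) x ->
    (p ^ i %| m + n - k)%N -> c * x`_n * (sha_coef m n k)%:R = 0.
  move=> x_pi pi_mnk; have [pi_n | pi_n] := boolP (p ^ i %| n)%N.
    by rewrite x_pi ?mulr0 ?mul0r.
  move: (prime_dvdn_sha_coef p_pr pi_mnk pi_n).
  by rewrite (dvdn_pcharf p_char) => /eqP->; rewrite mulr0.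
split=> [j _ | x y x_pi y_pi j pi_j | x x_pi j pi_j | r x x_pi].
- by rewrite coef0.
- by rewrite coefD x_pi ?y_pi ?addr0.
- by rewrite coefN x_pi ?oppr0.
split=> j pi_j; apply: sha_mul_coef_eq0 => m n k mnk_j.
  by apply: term_eq0; rewrite ?mnk_j.
by rewrite sha_coefC (mulrC x`_m) term_eq0 // addnC mnk_j.
Qed.

Theorem lemma3p2 (F : fieldType) (p : nat) (lam : F) :
  p \in [pchar F] -> ~ sha_noetherian lam.
Proof.
move=> p_char noetherian; have p_gt1 := prime_gt1 (pcharf_prime p_char).
pose I i := @avoids_multiples F (p ^ i).
have I_incr i x : I i x -> I i.+1 x by apply/avoids_multiplesW/dvdn_exp2l.
have [N stable] := noetherian I (fun i => sha_ideal_avoids_multiples lam i p_char) I_incr.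
have /(stable N.+1 (leqnSn N)) : I N.+1 'X^(p ^ N).
  by apply/avoids_multiples_XnP; rewrite dvdn_Pexp2l // ltnn.
by move/avoids_multiples_XnP; rewrite dvdnn.
Qed.
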